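(* Let $G$ be an interval filament graph with a filament representation $\varphi$. Suppose a cop occupies the vertex $u$ and the robber occupies a vertex whose filament is contained in the bottom region of $\varphi(u)$. Then, as long as a cop stays on $u$, the robber stays on vertices whose filaments are contained in the bottom region of $\varphi(u)$ (any move leaving it results in his immediate capture).
   Context: An interval filament on $[a,b]$ ($a<b$) is the graph of a continuous $f\colon[a,b]\to\mathbb{R}$ with $f(a)=f(b)=0$ and $f>0$ on $(a,b)$. An interval filament graph has a representation $\varphi$ assigning filaments to vertices so that distinct vertices are adjacent iff their filaments intersect. Each filament splits the upper half-plane into the unbounded top region and the bounded bottom region (the region between the filament and the $x$-axis). Game of cops and robber: alternate moves, each piece stays or moves to an adjacent vertex; capture when a cop occupies the robber's vertex (a robber moving to a neighbor of a cop's vertex is captured in the next cop move). *)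

From Stdlib Require Export Reals.
Open Scope R_scope.

(* An interval filament on [a,b], a < b: the graph of a continuous
   f : [a,b] -> R with f a = f b = 0 and f > 0 on (a,b).
   f is a total function R -> R; only its values on [a,b] matter. *)
Record filament := Filament {
  fa : R;
  fb : R;
  ff : R -> R;
  f_lt : fa < fb;
  f_cont : forall x, fa <= x <= fb ->
             continue_in ff (fun y => fa <= y <= fb) x;
  f_a0 : ff fa = 0;
  f_b0 : ff fb = 0;
  f_pos : forall x, fa < x < fb -> 0 < ff x
}.

Definition on_filament (F : filament) (p : R * R) : Prop :=
  fa F <= fst p <= fb F /\ snd p = ff F (fst p).

Definition fil_intersect (F1 F2 : filament) : Prop :=
  exists p, on_filament F1 p /\ on_filament F2 p.

Definition bottom_region (F : filament) (p : R * R) : Prop :=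
  fa F < fst p < fb F /\ 0 <= snd p < ff F (fst p).

Definition contained_in_bottom (F1 F2 : filament) : Prop :=
  forall p, on_filament F1 p -> bottom_region F2 p.

Definition filament_rep {V : Type} (adj : V -> V -> Prop)
  (phi : V -> filament) : Prop :=
  forall u v, u <> v -> (adj u v <-> fil_intersect (phi u) (phi v)).

From Stdlib Require Import Reals Lra Classical.
Open Scope R_scope.

(* If the filament of w leaves the bottom region of phi(u), it has a point
   strictly below phi(u) (where it meets the filament of v, which lies in that
   region) and a point on or above phi(u), or outside the interval of phi(u)
   where phi(u) touches the x-axis.  Between these two abscissae the height
   difference of the two filaments changes sign, so by the intermediate value
   theorem the filaments meet, i.e. w is adjacent to u. *)

Definition clamp (c d x : R) : R := Rmax c (Rmin d x).

Lemma clamp_in c d x : c <= d -> c <= clamp c d x <= d.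
Proof. intros; unfold clamp, Rmax, Rmin; repeat destruct Rle_dec; lra. Qed.

Lemma clamp_id c d x : c <= x <= d -> clamp c d x = x.
Proof. intros; unfold clamp, Rmax, Rmin; repeat destruct Rle_dec; lra. Qed.

Lemma Rabs_clamp_sub c d x y :
  c <= d -> Rabs (clamp c d y - clamp c d x) <= Rabs (y - x).
Proof.
  intros; unfold clamp, Rmax, Rmin; repeat destruct Rle_dec;
  unfold Rabs; repeat destruct Rcase_abs; lra.
Qed.

(* Clamping extends a function continuous on [a, b] to one continuous on R. *)
Lemma continuity_comp_clamp (f : R -> R) a b c d :
  a <= c -> c <= d -> d <= b ->
  (forall x, a <= x <= b -> continue_in f (fun y => a <= y <= b) x) ->
  continuity (fun x => f (clamp c d x)).
Proof.
  intros Hac Hcd Hdb Hf x eps Heps.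
  assert (Hx := clamp_in c d x Hcd).
  destruct (Hf (clamp c d x) ltac:(lra) eps Heps) as [alp [Halp Hclose]].
  exists alp; split; [exact Halp |].
  intros y [_ Hy]; simpl in *; unfold R_dist in *.
  destruct (Req_dec (clamp c d y) (clamp c d x)) as [E | E].
  - rewrite E, Rminus_diag, Rabs_R0; lra.
  - assert (Hy' := clamp_in c d y Hcd).
    apply Hclose; split; [split; [lra | auto] |].
    simpl; unfold R_dist.
    eapply Rle_lt_trans; [apply Rabs_clamp_sub; lra | exact Hy].
Qed.

Lemma ff_nonneg (F : filament) x : fa F <= x <= fb F -> 0 <= ff F x.
Proof.
  intros Hx.
  destruct (Req_dec x (fa F)) as [-> | Ha]; [rewrite f_a0; lra |].
  destruct (Req_dec x (fb F)) as [-> | Hb]; [rewrite f_b0; lra |].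
  left; apply f_pos; lra.
Qed.

Lemma fil_intersect_of_sign_change (F G : filament) c d :
  c <= d -> fa F <= c -> d <= fb F -> fa G <= c -> d <= fb G ->
  (ff F c - ff G c) * (ff F d - ff G d) <= 0 -> fil_intersect F G.
Proof.
  intros Hcd HFc HFd HGc HGd Hsign.
  set (k := fun x => ff F (clamp c d x) - ff G (clamp c d x)).
  assert (Hk : continuity k).
  { apply continuity_minus;
      [apply (continuity_comp_clamp _ (fa F) (fb F))
      | apply (continuity_comp_clamp _ (fa G) (fb G))];
      auto using f_cont. }
  assert (Hkc : k c = ff F c - ff G c) by (unfold k; rewrite clamp_id; lra).
  assert (Hkd : k d = ff F d - ff G d) by (unfold k; rewrite clamp_id; lra).
  destruct (IVT_cor k c d Hk Hcd ltac:(rewrite Hkc, Hkd; exact Hsign))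
    as [z [Hz Hkz]].
  unfold k in Hkz; rewrite clamp_id in Hkz by lra.
  exists (z, ff F z); unfold on_filament; simpl; repeat split; lra.
Qed.

Lemma fil_intersect_of_sign_change_unordered (F G : filament) x y :
  fa F <= x <= fb F -> fa F <= y <= fb F ->
  fa G <= x <= fb G -> fa G <= y <= fb G ->
  (ff F x - ff G x) * (ff F y - ff G y) <= 0 -> fil_intersect F G.
Proof.
  intros HFx HFy HGx HGy Hsign.
  destruct (Rle_dec x y).
  - apply (fil_intersect_of_sign_change F G x y); lra.
  - apply (fil_intersect_of_sign_change F G y x); [lra .. |].
    rewrite Rmult_comm; exact Hsign.
Qed.

Lemma fil_intersect_of_bottom_region_and_outside (F G : filament) p q :
  on_filament F p -> bottom_region G p ->
  on_filament F q -> ~ bottom_region G q ->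
  fil_intersect F G.
Proof.
  destruct p as [x0 y0], q as [x1 y1].
  unfold on_filament, bottom_region; simpl.
  intros [HFx0 ->] [HGx0 Hbelow] [HFx1 ->] Hnot_below.
  assert (Hpos1 := ff_nonneg F x1 HFx1).
  assert (HGfa := f_a0 G); assert (HGfb := f_b0 G).
  destruct (Rle_dec x1 (fa G)).
  - assert (Hpos := ff_nonneg F (fa G) ltac:(lra)).
    apply (fil_intersect_of_sign_change_unordered F G (fa G) x0);
      [lra .. | nra].
  - destruct (Rle_dec (fb G) x1).
    + assert (Hpos := ff_nonneg F (fb G) ltac:(lra)).
      apply (fil_intersect_of_sign_change_unordered F G (fb G) x0);
        [lra .. | nra].
    + assert (Habove : ff G x1 <= ff F x1).
      { apply Rnot_lt_le; intro; apply Hnot_below; repeat split; lra. }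
      apply (fil_intersect_of_sign_change_unordered F G x1 x0);
        [lra .. | nra].
Qed.

Lemma not_contained_in_bottom (F G : filament) :
  ~ contained_in_bottom F G ->
  exists q, on_filament F q /\ ~ bottom_region G q.
Proof.
  intros Hnot; apply NNPP; intros Hnone; apply Hnot; intros q Hq.
  apply NNPP; intros Hout; apply Hnone; eauto.
Qed.

Theorem lemma1 (V : Type) (adj : V -> V -> Prop) (phi : V -> filament)
  (Hsym : forall x y, adj x y -> adj y x)
  (Hirr : forall x, ~ adj x x)
  (Hrep : filament_rep adj phi)
  (u v w : V) :
  contained_in_bottom (phi v) (phi u) ->
  (w = v \/ adj v w) ->
  ~ contained_in_bottom (phi w) (phi u) ->
  (w = u \/ adj w u).
Proof.
  intros Hv [-> | Hvw] Hw; [contradiction |].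
  destruct (classic (w = u)) as [-> | Hwu]; [now left | right].
  assert (Hvw_neq : v <> w) by (intros ->; exact (Hirr w Hvw)).
  destruct (proj1 (Hrep v w Hvw_neq) Hvw) as [p [Hpv Hpw]].
  destruct (not_contained_in_bottom _ _ Hw) as [q [Hqw Hq]].
  apply (proj2 (Hrep w u Hwu)).
  exact (fil_intersect_of_bottom_region_and_outside _ _ p q Hpw (Hv p Hpv) Hqw Hq).
Qed.
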